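(* Let $n\ge 2k\ge 4$ with $n$ even, let $1\le i<j\le k$, and let $\lambda,\nu$ be dominant integral $\mathfrak{gl}(k)$-weights with $\nu=\lambda_{(ij)}$. Fix a sign $\pm$ and consider the irreducible $\mathrm P$-modules $\mathrm V_\lambda\otimes\mathbb S_\pm$ and $\mathrm V_\nu\otimes\mathbb S_\pm$. Suppose that the highest weights of their dual modules either both lie on the affine Weyl orbit of $\frac12(1-n,\ldots,1-n\,|\,1,\ldots,1)$ or both lie on the affine Weyl orbit of $\frac12(1-n,\ldots,1-n\,|\,1,\ldots,1,-1)$. Then $c(\mathrm V_\lambda\otimes\mathbb S_\pm)=c(\mathrm V_\nu\otimes\mathbb S_\pm)$, i.e. $\alpha_{ij}:=c(\mathrm V_\lambda\otimes\mathbb S_\pm)-c(\mathrm V_{\lambda_{(ij)}}\otimes\mathbb S_\pm)=0$.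
   Context: Setting: $\mathfrak g=\mathfrak{so}(n+k,k)$, $\mathrm G$ a covering group of the identity component of $\mathrm{SO}(n+k,k)$, $\mathrm P$ the parabolic subgroup stabilizing a maximal isotropic $k$-plane, with Levi factor $\mathrm G_0$, $\mathfrak g_0\cong\mathfrak{gl}(k,\mathbb R)\oplus\mathfrak{so}(n)$, $\mathfrak p=\mathfrak g_0\oplus\mathfrak p_+$. Irreducible $\mathrm G_0$-modules are regarded as $\mathrm P$-modules with $\mathfrak p_+$ acting trivially; all modules are complexified. Weights of $\mathfrak g_{\mathbb C}=\mathfrak{so}(n+2k,\mathbb C)$ (with a Cartan subalgebra contained in $\mathfrak g_0$) are written $(a_1,\ldots,a_k\,|\,b_1,\ldots,b_{n/2})$, the first block being the $\mathfrak{gl}(k)$-coordinates $\epsilon_1,\ldots,\epsilon_k$ and the second standard $\mathfrak{so}(n)$-coordinates; positive roots are $e_a\pm e_b$, $a<b$, in the combined coordinates, and $\rho=(N-1,N-2,\ldots,1,0)$ with $N=k+n/2$ is the half-sum of positive roots. The affine action of the Weyl group is $w\cdot\mu=w(\mu+\rho)-\rho$. For a $\mathfrak{gl}(k)$-weight $\lambda=(\lambda_1,\ldots,\lambda_k)$ (dominant integral: $\lambda_a-\lambda_b\in\mathbb Z_{\ge0}$ for $a<b$), $\mathrm V_\lambda$ is the irreducible $\mathfrak{gl}(k)$-module with highest weight $\lambda$, the identity acting by $\sum\lambda_a$; $\lambda_{(ij)}$ is $\lambda$ with $\lambda_i,\lambda_j$ each increased by $1$. $\mathbb S_\pm$ are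 the half-spin modules of $\mathfrak{so}(n)$. For an irreducible $\mathrm P$-module $\mathrm W$ of this type, $c(\mathrm W):=\langle\mu,\mu+2\rho\rangle$, where $\mu$ is the highest weight of the dual module $\mathrm W^*$ (the negative of the lowest weight of $\mathrm W$) and $\langle\cdot,\cdot\rangle$ is the inner product on weights induced by the Killing form; this is the scalar by which the curved Casimir operator acts on sections of the associated bundle. *)

(* Weights of so(n+2k, C), n = 2m, in the combined
   coordinates (a_1..a_k | b_1..b_m), indexed by 'I_(k + m), m = n./2.
   Scalars: an arbitrary numClosedFieldType C (e.g. the complex numbers). *)
From HB Require Import structures.
From mathcomp Require Import all_boot all_order all_algebra all_fingroup.
Set Implicit Arguments. Unset Strict Implicit. Unset Printing Implicit Defensive.
Import Order.TTheory GRing.Theory Num.Theory.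
Local Open Scope ring_scope.

Section Weights.
Variables (C : numClosedFieldType) (k n : nat).

Notation m := (n./2).
Notation N := (k + n./2)%N.

Definition weight := 'I_N -> C.

Definition mkw (a : 'I_k -> C) (b : 'I_m -> C) : weight :=
  fun t => match split t with inl x => a x | inr y => b y end.

Definition rho : weight := fun t => ((N - 1 - t)%N)%:R.

(* inner product on weights induced by the Killing form of so(2N,C):
   B(H,H') = 4(N-1) sum h_t h'_t on the Cartan, so the dual form is
   (sum x_t y_t) / (4(N-1)). *)
Definition kform (x y : weight) : C := (\sum_t x t * y t) / (4 * (N - 1)%N)%:R.

(* Weyl group of D_N: signed permutations with an even number of sign
   changes, acting by (w x)_t = (-1)^(e t) x_(s t). *)
Definition weyl_act (s : 'S_N) (e : 'I_N -> bool) (x : weight) : weight :=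
  fun t => (if e t then -1 else 1) * x (s t).

Definition in_weylD (e : 'I_N -> bool) : bool := ~~ odd #|[pred t | e t]|.

Definition in_affine_orbit (mu p : weight) : Prop :=
  exists (s : 'S_N) (e : 'I_N -> bool),
    in_weylD e /\ mu = (fun t => weyl_act s e (fun u => p u + rho u) t - rho t).

Definition gl_dominant (lam : 'I_k -> C) : Prop :=
  forall a b : 'I_k, (a <= b)%N -> exists d : nat, lam a - lam b = d%:R.

Definition lam_ij (lam : 'I_k -> C) (i j : 'I_k) : 'I_k -> C :=
  fun a => lam a + (a == i)%:R + (a == j)%:R.

(* highest weights of the half-spin modules S_+ (sg = true) and S_- of so(n) *)
Definition spin_hw (sg : bool) : 'I_m -> C :=
  fun y => if sg || ((y : nat) != m.-1) then 1 / 2 else - (1 / 2).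

(* longest Weyl element of so(n) = D_m: -id if m even, and -id followed by
   the sign change of the last coordinate if m odd *)
Definition w0_so (x : 'I_m -> C) : 'I_m -> C :=
  fun y => if odd m && ((y : nat) == m.-1) then x y else - x y.

Definition w0_gl (x : 'I_k -> C) : 'I_k -> C := fun a => x (rev_ord a).

(* lowest weight of V_lam (x) S_sg = w0 (highest weight) *)
Definition lowest_VS (lam : 'I_k -> C) (sg : bool) : weight :=
  mkw (w0_gl lam) (w0_so (spin_hw sg)).

(* highest weight of the dual module (V_lam (x) S_sg)^* = - lowest weight *)
Definition dual_hw (lam : 'I_k -> C) (sg : bool) : weight :=
  fun t => - lowest_VS lam sg t.

Definition casimir_c (lam : 'I_k -> C) (sg : bool) : C :=
  let mu := dual_hw lam sg in kform mu (fun t => mu t + 2 * rho t).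

Definition base_pt1 : weight :=
  mkw (fun _ => (1 - n%:R) / 2) (fun _ => 1 / 2).
Definition base_pt2 : weight :=
  mkw (fun _ => (1 - n%:R) / 2)
      (fun y => if (y : nat) == m.-1 then - (1 / 2) else 1 / 2).

End Weights.

Arguments dual_hw : clear implicits.
Arguments dual_hw {C} k n lam sg.
Arguments casimir_c : clear implicits.
Arguments casimir_c {C} k n lam sg.
Arguments base_pt1 C k n : clear implicits.
Arguments base_pt2 C k n : clear implicits.
Arguments in_affine_orbit : clear implicits.
Arguments in_affine_orbit {C} k n mu p.

From HB Require Import structures.
From mathcomp Require Import all_boot all_order all_algebra all_fingroup.
From mathcomp Require Import ring.
Import Order.TTheory GRing.Theory Num.Theory.
Local Open Scope ring_scope.

(* Since <mu, mu + 2 rho> = |mu + rho|^2 - |rho|^2 and signed permutations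
   preserve the sum of squares, the Casimir eigenvalue is constant on every
   affine Weyl orbit; both modules have dual highest weights on the same
   orbit, so their eigenvalues agree. *)

Section AffineOrbit.
Variables (C : numClosedFieldType) (k n : nat).

Local Notation weight := (weight C k n).
Local Notation rho := (@rho C k n).

Lemma sum_sqr_weyl_act (s : 'S_(k + n./2)) (e : 'I_(k + n./2) -> bool)
    (x : weight) :
  \sum_t weyl_act s e x t ^+ 2 = \sum_t x t ^+ 2.
Proof.
rewrite [RHS](reindex_inj (@perm_inj _ s)); apply: eq_bigr => t _.
by rewrite /weyl_act; case: (e t); ring.
Qed.

Lemma sum_casimir_shift (mu : weight) :
  \sum_t mu t * (mu t + 2 * rho t) =
  \sum_t (mu t + rho t) ^+ 2 - \sum_t rho t ^+ 2.
Proof. by rewrite -sumrB; apply: eq_bigr => t _; ring. Qed.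

Lemma kform_affine_orbit (mu p : weight) :
  in_affine_orbit k n mu p ->
  kform mu (fun t => mu t + 2 * rho t) = kform p (fun t => p t + 2 * rho t).
Proof.
case=> s [e [_ ->]]; rewrite /kform !sum_casimir_shift.
under eq_bigr => t _ do rewrite subrK.
by rewrite sum_sqr_weyl_act.
Qed.

End AffineOrbit.

Theorem theorem4 (C : numClosedFieldType) (k n : nat)
  (hn_even : ~~ odd n) (hk : (4 <= 2 * k)%N) (hkn : (2 * k <= n)%N)
  (i j : 'I_k) (hij : (i < j)%N)
  (lam nu : 'I_k -> C)
  (hlam : gl_dominant lam) (hnu : gl_dominant nu)
  (hnu_def : nu = lam_ij lam i j)
  (sg : bool)
  (horb : (in_affine_orbit k n (dual_hw k n lam sg) (base_pt1 C k n) /\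
           in_affine_orbit k n (dual_hw k n nu sg) (base_pt1 C k n)) \/
          (in_affine_orbit k n (dual_hw k n lam sg) (base_pt2 C k n) /\
           in_affine_orbit k n (dual_hw k n nu sg) (base_pt2 C k n))) :
  casimir_c k n lam sg = casimir_c k n nu sg.
Proof.
by rewrite /casimir_c; case: horb => -[/kform_affine_orbit -> /kform_affine_orbit ->].
Qed.
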